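(* Let $X$ be a locally solid vector lattice. Then each of $Orth_n(X)$, $Orth_b(X)$ and $Orth_c(X)$ is a vector lattice (under the order inherited from $Orth(X)$). In particular, if $T$ belongs to one of these spaces, then its modulus $|T|$ exists and belongs to the same space.
   Context: All vector lattices are Archimedean. For $x,y$ in a vector lattice, $x\perp y$ means $|x|\wedge|y|=0$. A linear operator $T:X\to X$ is band preserving if $x\perp y$ implies $T(x)\perp y$. An orthomorphism on $X$ is an order bounded band preserving linear operator; $Orth(X)$ is the vector lattice of all orthomorphisms on $X$ (ordered by $S\le T$ iff $S(x)\le T(x)$ for all $x\ge 0$). A locally solid vector lattice is a vector lattice with a linear topology having a base of solid zero neighborhoods. An orthomorphism $T$ on a locally solid vector lattice $X$ is $nb$-bounded if there is a zero neighborhood $U$ such that $T(U)$ is topologically bounded; it is $bb$-bounded if it maps topologically bounded sets to topologically bounded sets. $Orth_n(X)$, $Orth_b(X)$, $Orth_c(X)$ denote the sets of $nb$-bounded, $bb$-bounded, and continuous orthomorphisms on $X$, respectively. *)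

From HB Require Import structures.
From mathcomp Require Import all_boot all_order all_algebra.
From mathcomp Require Import all_classical all_reals all_analysis.
Set Implicit Arguments. Unset Strict Implicit. Unset Printing Implicit Defensive.
Import Order.TTheory GRing.Theory Num.Theory.
Local Open Scope classical_set_scope.
Local Open Scope ring_scope.

Record vector_lattice (R : realType) (X : lmodType R) := VectorLattice {
  vle : X -> X -> Prop;
  vsup : X -> X -> X;
  vle_refl : forall x, vle x x;
  vle_trans : forall x y z, vle x y -> vle y z -> vle x z;
  vle_anti : forall x y, vle x y -> vle y x -> x = y;
  vle_add : forall x y z, vle x y -> vle (x + z) (y + z);
  vle_scale : forall (a : R) x y, 0 <= a -> vle x y -> vle (a *: x) (a *: y);
  vsup_ub1 : forall x y, vle x (vsup x y);
  vsup_ub2 : forall x y, vle y (vsup x y);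
  vsup_least : forall x y z, vle x z -> vle y z -> vle (vsup x y) z;
  varchimedean : forall x y, vle 0 x -> (forall n : nat, vle (x *+ n) y) -> x = 0
}.

Section VL.
Variables (R : realType) (X : topologicalLmodType R) (L : vector_lattice X).

Definition vinf (x y : X) : X := - vsup L (- x) (- y).
Definition vabs (x : X) : X := vsup L x (- x).
Definition vdisj (x y : X) : Prop := vinf (vabs x) (vabs y) = 0.

Definition solid (A : set X) : Prop :=
  forall x y, vle L (vabs y) (vabs x) -> A x -> A y.

Definition locally_solid : Prop :=
  forall U : set X, nbhs (0 : X) U ->
    exists V : set X, [/\ nbhs (0 : X) V, solid V & V `<=` U].

Definition linear_op (T : X -> X) : Prop :=
  forall (a : R) (x y : X), T (a *: x + y) = a *: T x + T y.

Definition order_bounded (T : X -> X) : Prop :=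
  forall x y, vle L x y -> exists a b : X,
    forall z, vle L x z -> vle L z y -> vle L a (T z) /\ vle L (T z) b.

Definition band_preserving (T : X -> X) : Prop :=
  forall x y, vdisj x y -> vdisj (T x) y.

Definition orthomorphism (T : X -> X) : Prop :=
  [/\ linear_op T, order_bounded T & band_preserving T].

Definition orth_le (S T : X -> X) : Prop :=
  forall x, vle L 0 x -> vle L (S x) (T x).

Definition orth_lub (S T U : X -> X) : Prop :=
  [/\ orthomorphism U, orth_le S U, orth_le T U &
      forall V, orthomorphism V -> orth_le S V -> orth_le T V -> orth_le U V].

Definition tbounded (B : set X) : Prop :=
  forall U : set X, nbhs (0 : X) U ->
    exists t : R, 0 < t /\ B `<=` [set t *: u | u in U].

Definition nb_bounded (T : X -> X) : Prop :=
  exists U : set X, nbhs (0 : X) U /\ tbounded (T @` U).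

Definition bb_bounded (T : X -> X) : Prop :=
  forall B : set X, tbounded B -> tbounded (T @` B).

(* The class {T in Orth(X) | Q T} is a vector sublattice of Orth(X):
   a linear subspace, containing the supremum (taken in Orth(X)) of any two
   of its members, and in particular the modulus |T| = T \/ (-T). *)
Definition orth_sublattice (Q : (X -> X) -> Prop) : Prop :=
  let C := fun T => orthomorphism T /\ Q T in
  [/\ C (fun _ => 0),
      forall (a : R) S T, C S -> C T -> C (fun x => a *: S x + T x),
      forall S T, C S -> C T -> exists U, C U /\ orth_lub S T U &
      forall T, C T -> exists M, C M /\ orth_lub T (fun x => - T x) M].

End VL.

From Pilot Require Import Defs.
From HB Require Import structures.
From mathcomp Require Import all_boot all_order all_algebra.
From mathcomp Require Import all_classical all_reals all_analysis.
Set Implicit Arguments. Unset Strict Implicit. Unset Printing Implicit Defensive.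
Import Order.TTheory GRing.Theory Num.Theory.
Local Open Scope classical_set_scope.
Local Open Scope ring_scope.

(* For an orthomorphism T of an Archimedean vector lattice X, band
   preservation gives |T x| = |T |x||, and order boundedness together with
   the Archimedean property shows that x |-> |T x| is monotone on the
   positive cone; it is then additive and positively homogeneous there, so
   it extends to the linear map |T| x := |T x^+| - |T x^-|.  This map is an
   orthomorphism and the supremum of T and -T in Orth(X); the supremum of
   two orthomorphisms is then S \/ T = (S + T + |S - T|) / 2.  Hence every
   class of maps that contains 0 and is closed under linear combinations
   and under T |-> |T| is a vector sublattice of Orth(X)
   (orth_sublattice_of_closed). *)

Lemma subr_eq_subr (V : zmodType) (a b c d : V) :
  a - b = c - d <-> a + d = c + b.
Proof.
split=> h; first by rewrite -(subrK b a) h addrAC subrK.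
by rewrite -(addrK d a) h addrAC addrK.
Qed.

Section VectorLatticeCalculus.
Variables (R : realType) (X : topologicalLmodType R) (L : vector_lattice X).
Local Notation "x <=: y" := (vle L x y) (at level 70).
Local Notation sup := (vsup L).
Local Notation inf := (@vinf R X L).
Local Notation vabs := (@vabs R X L).
Local Notation vdisj := (@vdisj R X L).

Lemma lev_refl x : x <=: x. Proof. exact: vle_refl. Qed.
Lemma lev_trans y x z : x <=: y -> y <=: z -> x <=: z. Proof. exact: vle_trans. Qed.
Arguments lev_trans y [x z].
Lemma lev_anti x y : x <=: y -> y <=: x -> x = y. Proof. exact: vle_anti. Qed.
Lemma levD2r z x y : x <=: y -> x + z <=: y + z. Proof. exact: vle_add. Qed.
Arguments levD2r z [x y].
Lemma levD2l z x y : x <=: y -> z + x <=: z + y.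
Proof. by rewrite ![z + _]addrC; apply: levD2r. Qed.
Arguments levD2l z [x y].
Lemma levD a b c d : a <=: b -> c <=: d -> a + c <=: b + d.
Proof. by move=> h1 h2; apply: (lev_trans (b + c)); [apply: levD2r|apply: levD2l]. Qed.
Lemma subv_ge0 x y : x <=: y -> 0 <=: y - x.
Proof. by move=> h; have := levD2r (- x) h; rewrite subrr. Qed.
Lemma subv_ge0_le x y : 0 <=: y - x -> x <=: y.
Proof. by move=> h; have := levD2r x h; rewrite add0r subrK. Qed.
Lemma levN x y : x <=: y -> - y <=: - x.
Proof. by move=> h; have := levD2r (- x - y) h; rewrite addNKr addrCA subrr addr0. Qed.
Lemma levNl x y : - x <=: y -> - y <=: x.
Proof. by move=> /levN; rewrite opprK. Qed.
Lemma oppv_le0 x : 0 <=: x -> - x <=: 0.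
Proof. by move=> /levN; rewrite oppr0. Qed.
Lemma levZ a x y : 0 <= a -> x <=: y -> a *: x <=: a *: y.
Proof. exact: vle_scale. Qed.
Lemma levZ_nonpos a x y : a <= 0 -> x <=: y -> a *: y <=: a *: x.
Proof.
move=> a0 h; have b0 : 0 <= - a by rewrite oppr_ge0.
by have := levN (levZ b0 h); rewrite !scaleNr !opprK.
Qed.
Lemma levZ_inv a x y : 0 < a -> a *: x <=: a *: y -> x <=: y.
Proof.
move=> a0 h; have ia : 0 <= a^-1 by rewrite invr_ge0 ltW.
by have := levZ ia h; rewrite !scalerA mulVf ?gt_eqF // !scale1r.
Qed.
Lemma scalev_ge0 a x : 0 <= a -> 0 <=: x -> 0 <=: a *: x.
Proof. by move=> a0 h; have := levZ a0 h; rewrite scaler0. Qed.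
Lemma addv_ge0 x y : 0 <=: x -> 0 <=: y -> 0 <=: x + y.
Proof. by move=> h1 h2; have := levD h1 h2; rewrite addr0. Qed.
Lemma lev_addl x y : 0 <=: x -> y <=: x + y.
Proof. by move=> h; have := levD2r y h; rewrite add0r. Qed.
Lemma lev_addr x y : 0 <=: x -> y <=: y + x.
Proof. by rewrite addrC; apply: lev_addl. Qed.
Lemma scale2v (v : X) : 2 *: v = v + v.
Proof. by rewrite -[2]/(2%:R) scaler_nat mulr2n. Qed.

Lemma supv_ubl x y : x <=: sup x y. Proof. exact: vsup_ub1. Qed.
Lemma supv_ubr x y : y <=: sup x y. Proof. exact: vsup_ub2. Qed.
Lemma supv_least x y z : x <=: z -> y <=: z -> sup x y <=: z.
Proof. exact: vsup_least. Qed.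
Lemma supvC x y : sup x y = sup y x.
Proof.
by apply: lev_anti; apply: supv_least;
  [apply: supv_ubr|apply: supv_ubl|apply: supv_ubr|apply: supv_ubl].
Qed.
Lemma supv_idl x y : y <=: x -> sup x y = x.
Proof.
by move=> h; apply: lev_anti; [apply: supv_least => //; apply: lev_refl|apply: supv_ubl].
Qed.
Lemma supvDr x y z : sup x y + z = sup (x + z) (y + z).
Proof.
apply: lev_anti; last first.
  by apply: supv_least; apply: levD2r; [apply: supv_ubl|apply: supv_ubr].
suff h : sup x y <=: sup (x + z) (y + z) - z by have := levD2r z h; rewrite subrK.
apply: supv_least.
- by have := levD2r (- z) (supv_ubl (x + z) (y + z)); rewrite addrK.
- by have := levD2r (- z) (supv_ubr (x + z) (y + z)); rewrite addrK.
Qed.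
Lemma supvDl z x y : z + sup x y = sup (z + x) (z + y).
Proof. by rewrite addrC supvDr ![_ + z]addrC. Qed.
Lemma supvZ a x y : 0 <= a -> a *: sup x y = sup (a *: x) (a *: y).
Proof.
rewrite le_eqVlt => /orP[/eqP<-|a0].
  by rewrite !scale0r supv_idl //; apply: lev_refl.
apply: lev_anti; last first.
  by apply: supv_least; apply: levZ (ltW a0) _; [apply: supv_ubl|apply: supv_ubr].
apply: (@levZ_inv (a^-1)); first by rewrite invr_gt0.
have ia : 0 <= a^-1 by rewrite invr_ge0 ltW.
have aK v : a^-1 *: (a *: v) = v by rewrite scalerA mulVf ?gt_eqF // scale1r.
rewrite aK; apply: supv_least; rewrite -[X in X <=: _]aK; apply: levZ ia _;
  [apply: supv_ubl|apply: supv_ubr].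
Qed.

Lemma infvE x y : inf x y = x + y - sup x y.
Proof.
rewrite /vinf; have := supvDr (- x) (- y) (x + y).
rewrite addKr [- y + _]addrCA addNr addr0 [sup y x]supvC => <-.
by rewrite opprD addrCA subrr addr0.
Qed.
Lemma infv_lbl x y : inf x y <=: x.
Proof. by apply: levNl; apply: supv_ubl. Qed.
Lemma infv_lbr x y : inf x y <=: y.
Proof. by apply: levNl; apply: supv_ubr. Qed.
Lemma infv_greatest x y z : z <=: x -> z <=: y -> z <=: inf x y.
Proof.
by move=> h1 h2; rewrite -[z]opprK; apply: levN; apply: supv_least; apply: levN.
Qed.
Lemma infvC x y : inf x y = inf y x.
Proof. by rewrite /vinf supvC. Qed.
Lemma infv_mono x x' y y' : x <=: x' -> y <=: y' -> inf x y <=: inf x' y'.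
Proof.
move=> h1 h2; apply: infv_greatest; [apply: (lev_trans x)|apply: (lev_trans y)] => //;
  [apply: infv_lbl|apply: infv_lbr].
Qed.
Lemma infvDl z x y : z + inf x y = inf (z + x) (z + y).
Proof. by rewrite /vinf !opprD -supvDl opprD opprK. Qed.
Lemma infvZ a x y : 0 <= a -> a *: inf x y = inf (a *: x) (a *: y).
Proof. by move=> a0; rewrite /vinf scalerN supvZ // !scalerN. Qed.
Lemma infv_idl x y : x <=: y -> inf x y = x.
Proof.
by move=> h; apply: lev_anti; [apply: infv_lbl|apply: infv_greatest => //; apply: lev_refl].
Qed.

Lemma absv_ge x : x <=: vabs x. Proof. exact: supv_ubl. Qed.
Lemma absv_geN x : - x <=: vabs x. Proof. exact: supv_ubr. Qed.
Lemma absv_least x y : x <=: y -> - x <=: y -> vabs x <=: y.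
Proof. exact: supv_least. Qed.
Lemma absvN x : vabs (- x) = vabs x. Proof. by rewrite /Defs.vabs opprK supvC. Qed.
Lemma absv_ge0 x : 0 <=: vabs x.
Proof.
apply: (@levZ_inv 2) => //; rewrite scaler0 scale2v.
by have := levD (absv_ge x) (absv_geN x); rewrite subrr.
Qed.
Lemma absv_id x : 0 <=: x -> vabs x = x.
Proof. by move=> h; apply: supv_idl; apply: (lev_trans 0) => //; apply: oppv_le0. Qed.
Lemma absv_idem x : vabs (vabs x) = vabs x. Proof. exact/absv_id/absv_ge0. Qed.
Lemma absv0 : vabs 0 = 0. Proof. by apply: absv_id; apply: lev_refl. Qed.
Lemma absvZ a x : vabs (a *: x) = `|a| *: vabs x.
Proof.
have [a0|a0] := leP 0 a; first by rewrite ger0_norm // /Defs.vabs supvZ // scalerN.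
rewrite ltr0_norm // /Defs.vabs supvZ ?oppr_ge0 ?ltW //.
by rewrite !scaleNr !scalerN opprK supvC.
Qed.
Lemma absvD_le x y : vabs (x + y) <=: vabs x + vabs y.
Proof.
apply: absv_least; first by apply: levD; apply: absv_ge.
by rewrite opprD; apply: levD; apply: absv_geN.
Qed.

Definition vpos x := sup x 0.
Definition vneg x := sup (- x) 0.

Lemma vpos_ge0 x : 0 <=: vpos x. Proof. exact: supv_ubr. Qed.
Lemma vneg_ge0 x : 0 <=: vneg x. Proof. exact: supv_ubr. Qed.
Lemma vnegE x : vneg x = vpos x - x.
Proof. by rewrite /vneg /vpos supvDr add0r subrr supvC. Qed.
Lemma vpos_sub_neg x : vpos x - vneg x = x.
Proof. by rewrite vnegE opprB addrC subrK. Qed.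
Lemma vpos_add_neg x : vpos x + vneg x = vabs x.
Proof.
by rewrite vnegE addrA -scale2v /vpos supvZ // scaler0 supvDr add0r scale2v addrK.
Qed.
Lemma vpos_le_abs x : vpos x <=: vabs x.
Proof. by apply: supv_least; [apply: absv_ge|apply: absv_ge0]. Qed.
Lemma vneg_le_abs x : vneg x <=: vabs x.
Proof. by apply: supv_least; [apply: absv_geN|apply: absv_ge0]. Qed.
Lemma vpos_id x : 0 <=: x -> vpos x = x. Proof. exact: supv_idl. Qed.
Lemma vposZ a x : 0 <= a -> vpos (a *: x) = a *: vpos x.
Proof. by move=> a0; rewrite /vpos supvZ // scaler0. Qed.
Lemma vnegZ a x : 0 <= a -> vneg (a *: x) = a *: vneg x.
Proof. by move=> a0; rewrite /vneg supvZ // scaler0 scalerN. Qed.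
Lemma vneg_id x : 0 <=: x -> vneg x = 0.
Proof. by move=> h; rewrite vnegE vpos_id // subrr. Qed.

(* x^+ /\ x^- = 0, since x^+ \/ x^- = |x| = x^+ + x^-. *)
Lemma infv_pos_neg x : inf (vpos x) (vneg x) = 0.
Proof.
rewrite infvE vpos_add_neg.
suff -> : sup (vpos x) (vneg x) = vabs x by rewrite subrr.
apply: lev_anti; first by apply: supv_least; [apply: vpos_le_abs|apply: vneg_le_abs].
apply: absv_least.
- by apply: (lev_trans (vpos x)); apply: supv_ubl.
- by apply: (lev_trans (vneg x)); [apply: supv_ubl|apply: supv_ubr].
Qed.

Lemma vdisjC x y : vdisj x y -> vdisj y x. Proof. by rewrite /Defs.vdisj infvC. Qed.
Lemma vdisj0 y : vdisj 0 y.
Proof. by rewrite /Defs.vdisj absv0; apply: infv_idl; apply: absv_ge0. Qed.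

Lemma infv_eq0_mono p q r : 0 <=: p -> p <=: q -> 0 <=: r ->
  inf q r = 0 -> inf p r = 0.
Proof.
move=> p0 pq r0 h; apply: lev_anti; last exact: infv_greatest.
by rewrite -h; apply: infv_mono => //; apply: lev_refl.
Qed.
Lemma vdisj_mono u v y : vabs u <=: vabs v -> vdisj v y -> vdisj u y.
Proof. by move=> h; apply: infv_eq0_mono => //; apply: absv_ge0. Qed.

Lemma infvD_le p q r : 0 <=: p -> 0 <=: q -> 0 <=: r ->
  inf (p + q) r <=: inf p r + inf q r.
Proof.
move=> p0 q0 r0.
rewrite [inf p r + _]addrC infvDl ![inf q r + _]addrC !infvDl.
apply: infv_greatest; apply: infv_greatest.
- exact: infv_lbl.
- by apply: (lev_trans r); [apply: infv_lbr|apply: lev_addl].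
- by apply: (lev_trans r); [apply: infv_lbr|apply: lev_addr].
- by apply: (lev_trans r); [apply: infv_lbr|apply: lev_addr].
Qed.
Lemma infvD_eq0 p q r : 0 <=: p -> 0 <=: q -> 0 <=: r ->
  inf p r = 0 -> inf q r = 0 -> inf (p + q) r = 0.
Proof.
move=> p0 q0 r0 h1 h2; apply: lev_anti; last first.
  by apply: infv_greatest => //; apply: addv_ge0.
by have := infvD_le p0 q0 r0; rewrite h1 h2 addr0.
Qed.
Lemma infvZ_eq0 c p q : 0 <= c -> 0 <=: p -> 0 <=: q -> inf p q = 0 ->
  inf (c *: p) q = 0.
Proof.
move=> c0 p0 q0 h; have cp0 : 0 <=: c *: p by apply: scalev_ge0.
have [c1|c1] := leP c 1.
  apply: (infv_eq0_mono cp0 _ q0 h).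
  apply: subv_ge0_le; rewrite -{1}[p]scale1r -scalerBl; apply: scalev_ge0 => //.
  by rewrite subr_ge0.
apply: lev_anti; last exact: infv_greatest.
have -> : (0 : X) = c *: inf p q by rewrite h scaler0.
rewrite infvZ //; apply: infv_mono; first exact: lev_refl.
apply: subv_ge0_le; rewrite -{2}[q]scale1r -scalerBl; apply: scalev_ge0 => //.
by rewrite subr_ge0 ltW.
Qed.

Lemma vdisj_comb a u v y : vdisj u y -> vdisj v y -> vdisj (a *: u + v) y.
Proof.
rewrite /Defs.vdisj => hu hv.
apply: (@infv_eq0_mono _ (`|a| *: vabs u + vabs v)) => //; try exact: absv_ge0.
  by rewrite -absvZ; apply: absvD_le.
apply: infvD_eq0 => //; try exact: absv_ge0.
- by apply: scalev_ge0 => //; apply: absv_ge0.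
- by apply: infvZ_eq0 => //; apply: absv_ge0.
Qed.
Lemma vdisj_opp u y : vdisj u y -> vdisj (- u) y.
Proof. by rewrite /Defs.vdisj absvN. Qed.
Lemma vdisj_sub u v y : vdisj u y -> vdisj v y -> vdisj (u - v) y.
Proof. by move=> h1 h2; rewrite addrC -scaleN1r; apply: vdisj_comb. Qed.
Lemma vdisj_abs u y : vdisj u y -> vdisj (vabs u) y.
Proof. by rewrite /Defs.vdisj absv_idem. Qed.
Lemma vdisj_pos u y : vdisj u y -> vdisj (vpos u) y.
Proof. by apply: vdisj_mono; rewrite (absv_id (vpos_ge0 u)); apply: vpos_le_abs. Qed.
Lemma vdisj_neg u y : vdisj u y -> vdisj (vneg u) y.
Proof. by apply: vdisj_mono; rewrite (absv_id (vneg_ge0 u)); apply: vneg_le_abs. Qed.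
Lemma vdisj_pos_neg x : vdisj (vpos x) (vneg x).
Proof.
by rewrite /Defs.vdisj !absv_id; [exact: infv_pos_neg|exact: vneg_ge0|exact: vpos_ge0].
Qed.

Lemma absv_sub_disj p n : 0 <=: p -> 0 <=: n -> inf p n = 0 ->
  vabs (p - n) = p + n.
Proof.
move=> p0 n0 h.
have hs : sup p n = p + n by move: h; rewrite infvE => /subr0_eq.
have e1 : p - n = (p + p) - (p + n) by rewrite opprD addrA addrK.
have e2 : - (p - n) = (n + n) - (p + n).
  by rewrite opprB opprD addrACA subrr addr0.
by rewrite /Defs.vabs e2 e1 -supvDr -!scale2v -supvZ // hs scale2v addrK.
Qed.

Lemma vdisj_inf p q : 0 <=: p -> 0 <=: q -> vdisj p q -> inf p q = 0.
Proof. by move=> p0 q0; rewrite /Defs.vdisj !absv_id. Qed.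

(* The modulus is additive on disjoint elements: split u + v into the
   disjoint positive parts u^+ + v^+ and u^- + v^-. *)
Lemma absvD_disj u v : vdisj u v -> vabs (u + v) = vabs u + vabs v.
Proof.
move=> huv.
have cross a b : vdisj a b -> inf (vneg b) (vpos a) = 0.
  move=> h; apply: vdisj_inf; [exact: vneg_ge0|exact: vpos_ge0|].
  exact: vdisj_neg (vdisjC (vdisj_pos h)).
have negpos a : inf (vneg a) (vpos a) = 0 by rewrite infvC infv_pos_neg.
have P0 : 0 <=: vpos u + vpos v by apply: addv_ge0; apply: vpos_ge0.
have N0 : 0 <=: vneg u + vneg v by apply: addv_ge0; apply: vneg_ge0.
have E : u + v = (vpos u + vpos v) - (vneg u + vneg v).
  by rewrite opprD addrACA !vpos_sub_neg.
rewrite E absv_sub_disj //; first by rewrite addrACA !vpos_add_neg.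
have dnp := cross _ _ huv; have dpn := cross _ _ (vdisjC huv).
have pu := vpos_ge0 u; have pv := vpos_ge0 v.
have nu := vneg_ge0 u; have nv := vneg_ge0 v.
rewrite infvC; apply: infvD_eq0 => //;
  by rewrite infvC; apply: infvD_eq0 => //; rewrite infvC ?negpos ?dnp ?dpn.
Qed.

Lemma archimedean_dyadic d c : 0 <=: c ->
  (forall n, (2 ^ n)%:R *: d <=: c) -> d <=: 0.
Proof.
move=> c0 hd; suff dpos0 : vpos d = 0 by rewrite -dpos0; apply: supv_ubl.
apply: (varchimedean (y := c)); first exact: vpos_ge0.
move=> n; rewrite -scaler_nat; apply: (lev_trans ((2 ^ n)%:R *: vpos d)).
  apply: subv_ge0_le; rewrite -scalerBl; apply: scalev_ge0; last exact: vpos_ge0.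
  by rewrite subr_ge0 ler_nat ltnW // ltn_expl.
by rewrite -vposZ //; apply: supv_least; [exact: hd|exact: c0].
Qed.

End VectorLatticeCalculus.
Arguments lev_trans {R X L} y {x z}.

Section LinearOperators.
Variables (R : realType) (X : topologicalLmodType R) (T : X -> X).
Hypothesis linT : linear_op T.

Lemma linear_op0 : T 0 = 0.
Proof.
have := linT 1 0 0; rewrite !scale1r addr0 => /(congr1 (fun z => z - T 0)).
by rewrite subrr addrK => <-.
Qed.
Lemma linear_opD x y : T (x + y) = T x + T y.
Proof. by have := linT 1 x y; rewrite !scale1r. Qed.
Lemma linear_opZ a x : T (a *: x) = a *: T x.
Proof. by have := linT a x 0; rewrite !addr0 linear_op0 addr0. Qed.
Lemma linear_opN x : T (- x) = - T x.
Proof. by rewrite -scaleN1r linear_opZ scaleN1r. Qed.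
Lemma linear_opB x y : T (x - y) = T x - T y.
Proof. by rewrite linear_opD linear_opN. Qed.

End LinearOperators.

Lemma linear_op_comb (R : realType) (X : topologicalLmodType R) a (S T : X -> X) :
  linear_op S -> linear_op T -> linear_op (fun x => a *: S x + T x).
Proof.
move=> linS linT b x y; rewrite (linS b x y) (linT b x y) scalerDr scalerA.
by rewrite mulrC -scalerA [b *: (_ + _)]scalerDr addrACA.
Qed.

Section Modulus.
Variables (R : realType) (X : topologicalLmodType R) (L : vector_lattice X).
Local Notation "x <=: y" := (vle L x y) (at level 70).
Local Notation vabs := (@vabs R X L).
Local Notation vpos := (vpos L).
Local Notation vneg := (vneg L).
Variable T : X -> X.
Hypothesis orthT : orthomorphism L T.
Let linT : linear_op T. Proof. by case: orthT. Qed.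
Let bddT : order_bounded L T. Proof. by case: orthT. Qed.
Let bandT : band_preserving L T. Proof. by case: orthT. Qed.
Local Notation absT z := (vabs (T z)).

(* |T x| = |T |x||: T x^+ and T x^- are disjoint because T preserves bands. *)
Lemma absT_absv x : absT x = absT (vabs x).
Proof.
have hT : vdisj L (T (vpos x)) (T (vneg x)).
  exact/vdisjC/bandT/vdisjC/bandT/vdisj_pos_neg.
have hT' : vdisj L (T (vpos x)) (- T (vneg x)) by exact/vdisjC/vdisj_opp/vdisjC.
rewrite -(vpos_add_neg L x) -{1}(vpos_sub_neg L x) (linear_opB linT) (linear_opD linT).
by rewrite (absvD_disj hT) (absvD_disj hT') absvN.
Qed.

Lemma absT_bounded x : 0 <=: x -> exists c, 0 <=: c /\
  forall z, 0 <=: z -> z <=: x -> absT z <=: c.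
Proof.
move=> x0; have [a [b hab]] := bddT x0.
exists (vabs a + vabs b); split; first by apply: addv_ge0; apply: absv_ge0.
move=> z z0 zx; have [h1 h2] := hab z z0 zx; apply: absv_least.
- apply: (lev_trans b) => //; apply: (lev_trans (vabs b)); first exact: absv_ge.
  by apply: lev_addl; apply: absv_ge0.
- apply: (lev_trans (- a)); first exact: levN.
  apply: (lev_trans (vabs a)); first exact: absv_geN.
  by apply: lev_addr; apply: absv_ge0.
Qed.

(* Doubling step: for 0 <= y <= x, y1 := |2y - x| also lies in [0, x] and
   2 (|T y| - |T x|) <= |T y1| - |T x|, since 2 T y = T x + T (2y - x). *)
Lemma absT_doubling x y : 0 <=: y -> y <=: x -> exists y1,
  [/\ 0 <=: y1, y1 <=: x & 2 *: (absT y - absT x) <=: absT y1 - absT x].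
Proof.
move=> y0 yx; have x0 : 0 <=: x by apply: (lev_trans y).
exists (vabs (2 *: y - x)); split; first exact: absv_ge0.
- apply: absv_least.
  + apply: (lev_trans (x + x - x)); last by rewrite addrK; apply: lev_refl.
    by apply: levD2r; rewrite -scale2v; apply: levZ.
  + rewrite opprB; apply: (lev_trans (x - 0)); last by rewrite subr0; apply: lev_refl.
    by apply: levD2l; apply: levN; apply: scalev_ge0.
rewrite scalerBr -absT_absv.
apply: (lev_trans (absT x + absT (2 *: y - x) - 2 *: absT x)); last first.
  by rewrite scale2v opprD addrA [absT x + _ - absT x]addrAC subrr add0r; apply: lev_refl.
apply: levD2r.
have -> : 2 *: absT y = absT (x + (2 *: y - x)).
  by rewrite addrC subrK (linear_opZ linT) absvZ ger0_norm.
by rewrite (linear_opD linT); apply: absvD_le.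
Qed.

(* |T| is monotone on the positive cone: iterating the doubling step bounds
   2^n (|T y| - |T x|) uniformly, and X is Archimedean. *)
Lemma absT_mono x y : 0 <=: y -> y <=: x -> absT y <=: absT x.
Proof.
move=> y0 yx; have x0 : 0 <=: x by apply: (lev_trans y).
have [c [c0 hc]] := absT_bounded x0.
have dyadic n y' : 0 <=: y' -> y' <=: x -> (2 ^ n)%:R *: (absT y' - absT x) <=: c.
  elim: n y' => [|n IH] y' y0' yx'.
    rewrite expn0 scale1r; apply: (lev_trans (absT y')); last exact: hc.
    by apply: subv_ge0_le; rewrite opprB addrC subrK; apply: absv_ge0.
  have [y1 [h1 h2 h3]] := absT_doubling y0' yx'.
  rewrite expnS natrM mulrC -scalerA.
  by apply: (lev_trans ((2 ^ n)%:R *: (absT y1 - absT x))); [apply: levZ|apply: IH].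
have := archimedean_dyadic c0 (fun n => dyadic n y y0 yx).
by move=> /(levD2r (absT x)); rewrite subrK add0r.
Qed.

Lemma absT_le x w : 0 <=: x -> vabs w <=: x -> absT w <=: absT x.
Proof. by move=> x0 h; rewrite absT_absv; apply: absT_mono => //; apply: absv_ge0. Qed.

(* |T| is additive on the positive cone: expand |T (x + z)| as the supremum
   of the four maps T (+-x +- z), each dominated by |T (x + z)|. *)
Lemma absTD x z : 0 <=: x -> 0 <=: z -> absT (x + z) = absT x + absT z.
Proof.
move=> x0 z0; apply: lev_anti; first by rewrite (linear_opD linT); apply: absvD_le.
have xz0 : 0 <=: x + z by apply: addv_ge0.
have dom w : vabs w <=: x + z -> T w <=: absT (x + z).
  by move=> hw; apply: (lev_trans (absT w)); [apply: absv_ge|apply: absT_le].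
have Nx : - x <=: x by apply: (lev_trans 0) => //; apply: oppv_le0.
have Nz : - z <=: z by apply: (lev_trans 0) => //; apply: oppv_le0.
rewrite /Defs.vabs supvDr; apply: supv_least; rewrite supvDl; apply: supv_least.
- by rewrite -(linear_opD linT); apply: dom; rewrite absv_id //; apply: lev_refl.
- rewrite -(linear_opB linT); apply: dom; apply: absv_least; first exact: levD2l.
  by rewrite opprB addrC; apply: levD2r.
- rewrite -(linear_opN linT) -(linear_opD linT); apply: dom; apply: absv_least.
    exact: levD2r.
  by rewrite opprD opprK; apply: levD2l.
- rewrite -(linear_opN linT) -(linear_opB linT); apply: dom.
  by rewrite -opprD absvN absv_id //; apply: lev_refl.
Qed.

Lemma absTZ a p : 0 <= a -> absT (a *: p) = a *: absT p.
Proof. by move=> a0; rewrite (linear_opZ linT) absvZ ger0_norm. Qed.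

Definition orth_abs x := absT (vpos x) - absT (vneg x).

Lemma orth_absE x p n : 0 <=: p -> 0 <=: n -> x = p - n ->
  orth_abs x = absT p - absT n.
Proof.
move=> p0 n0 hx; have px := vpos_ge0 L x; have nx := vneg_ge0 L x.
rewrite /orth_abs; apply/subr_eq_subr; rewrite -!absTD //.
by congr (vabs (T _)); apply/subr_eq_subr; rewrite vpos_sub_neg.
Qed.

Lemma orth_abs_pos x : 0 <=: x -> orth_abs x = absT x.
Proof.
by move=> x0; rewrite /orth_abs vpos_id // vneg_id // (linear_op0 linT) absv0 subr0.
Qed.

Lemma orth_abs_comb b p1 n1 p2 n2 : 0 <= b ->
  0 <=: p1 -> 0 <=: n1 -> 0 <=: p2 -> 0 <=: n2 ->
  orth_abs (b *: (p1 - n1) + (p2 - n2)) =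
  b *: (absT p1 - absT n1) + (absT p2 - absT n2).
Proof.
move=> b0 p10 n10 p20 n20.
have bp := scalev_ge0 b0 p10; have bn := scalev_ge0 b0 n10.
rewrite (@orth_absE _ (b *: p1 + p2) (b *: n1 + n2)).
- by rewrite !absTD // !absTZ // scalerBr opprD addrACA.
- exact: addv_ge0.
- exact: addv_ge0.
- by rewrite scalerBr opprD addrACA.
Qed.

Lemma orth_abs_linear : linear_op orth_abs.
Proof.
move=> a x y; have [px nx] := (vpos_ge0 L x, vneg_ge0 L x).
have [py ny] := (vpos_ge0 L y, vneg_ge0 L y).
rewrite -{1}(vpos_sub_neg L x) -{1}(vpos_sub_neg L y).
have [a0|a0] := leP 0 a; first exact: orth_abs_comb.
have flip u v : a *: (u - v) = (- a) *: (v - u) by rewrite scaleNr -scalerN opprB.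
by rewrite flip orth_abs_comb ?oppr_ge0 ?ltW // -flip.
Qed.

Lemma orth_abs_mono x y : x <=: y -> orth_abs x <=: orth_abs y.
Proof.
move=> h; apply: subv_ge0_le; rewrite -(linear_opB orth_abs_linear).
by rewrite orth_abs_pos; [apply: absv_ge0|apply: subv_ge0].
Qed.

(* |T| is an orthomorphism: it is positive, hence order bounded, and band
   preservation passes to |T x^+| and |T x^-|. *)
Lemma orth_abs_orth : orthomorphism L orth_abs.
Proof.
split; first exact: orth_abs_linear.
- move=> x y h; exists (orth_abs x), (orth_abs y) => z h1 h2.
  by split; apply: orth_abs_mono.
- move=> x y h; apply: vdisj_sub; apply: vdisj_abs; apply: bandT.
  + exact: vdisj_pos.
  + exact: vdisj_neg.
Qed.

Lemma orth_abs_lub : orth_lub L T (fun x => - T x) orth_abs.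
Proof.
split; first exact: orth_abs_orth.
- by move=> x x0; rewrite orth_abs_pos //; apply: absv_ge.
- by move=> x x0; rewrite orth_abs_pos //; apply: absv_geN.
- move=> V _ h1 h2 x x0; rewrite orth_abs_pos //.
  by apply: absv_least; [apply: h1|apply: h2].
Qed.

End Modulus.

Section OrthLattice.
Variables (R : realType) (X : topologicalLmodType R) (L : vector_lattice X).
Local Notation "x <=: y" := (vle L x y) (at level 70).

Lemma orth_zero : orthomorphism L (fun _ : X => 0).
Proof.
split.
- by move=> a x y; rewrite scaler0 addr0.
- by move=> x y h; exists 0, 0 => z _ _; split; apply: lev_refl.
- by move=> x y h; apply: vdisj0.
Qed.

Lemma orth_comb a S T : orthomorphism L S -> orthomorphism L T ->
  orthomorphism L (fun x => a *: S x + T x).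
Proof.
move=> [linS bddS bandS] [linT bddT bandT]; split.
- exact: linear_op_comb.
- move=> x y h; have [a1 [b1 h1]] := bddS x y h; have [a2 [b2 h2]] := bddT x y h.
  have [a0|a0] := leP 0 a.
    exists (a *: a1 + a2), (a *: b1 + b2) => z z1 z2.
    have [u1 u2] := h1 z z1 z2; have [v1 v2] := h2 z z1 z2.
    by split; apply: levD => //; apply: levZ.
  exists (a *: b1 + a2), (a *: a1 + b2) => z z1 z2.
  have [u1 u2] := h1 z z1 z2; have [v1 v2] := h2 z z1 z2.
  by split; apply: levD => //; apply: levZ_nonpos => //; apply: ltW.
- by move=> x y h; apply: vdisj_comb; [apply: bandS|apply: bandT].
Qed.

Definition orth_sup (S T : X -> X) (x : X) : X :=
  2^-1 *: (S x + (T x + orth_abs L (fun y => (-1) *: T y + S y) x)).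

(* orth_sup S T as an iterated linear combination a *: F x + G x of S, T,
   |S - T| and 0, the shape handled by orth_comb. *)
Lemma orth_sup_combE S T : orth_sup S T = fun x =>
  2^-1 *: (1 *: S x + (1 *: T x + orth_abs L (fun y => (-1) *: T y + S y) x)) + 0.
Proof. by apply/funext => x; rewrite !scale1r addr0. Qed.

Lemma orth_sup_lub S T : orthomorphism L S -> orthomorphism L T ->
  orth_lub L S T (orth_sup S T).
Proof.
move=> orthS orthT.
have orthD : orthomorphism L (fun y => (-1) *: T y + S y) by apply: orth_comb.
have twice x : 0 <=: x ->
    2 *: orth_sup S T x = S x + (T x + vabs L (S x - T x)).
  move=> x0; rewrite /orth_sup (orth_abs_pos orthD x0) scalerA mulfV //.
  by rewrite scale1r scaleN1r [- T x + _]addrC.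
have eS x : S x + S x = S x + (T x + (S x - T x)).
  by rewrite [T x + _]addrC subrK.
have eT x : T x + T x = S x + (T x + - (S x - T x)).
  by rewrite opprB addrCA [S x + _]addrC subrK.
split.
- rewrite orth_sup_combE; apply: orth_comb; last exact: orth_zero.
  apply: (orth_comb 1 orthS); apply: (orth_comb 1 orthT).
  exact: orth_abs_orth.
- move=> x x0; apply: (@levZ_inv _ _ L 2) => //; rewrite twice // scale2v eS.
  by apply: levD2l; apply: levD2l; apply: absv_ge.
- move=> x x0; apply: (@levZ_inv _ _ L 2) => //; rewrite twice // scale2v eT.
  by apply: levD2l; apply: levD2l; apply: absv_geN.
- move=> V _ hS hT x x0; apply: (@levZ_inv _ _ L 2) => //; rewrite twice // scale2v.
  rewrite /Defs.vabs !supvDl; apply: supv_least.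
  + by rewrite -eS; apply: levD; apply: hS.
  + by rewrite -eT; apply: levD; apply: hT.
Qed.

Theorem orth_sublattice_of_closed (Q : (X -> X) -> Prop) :
  Q (fun _ => 0) ->
  (forall a S T, orthomorphism L S -> orthomorphism L T -> Q S -> Q T ->
     Q (fun x => a *: S x + T x)) ->
  (forall T, orthomorphism L T -> Q T -> Q (orth_abs L T)) ->
  orth_sublattice L Q.
Proof.
move=> Q0 Qcomb Qabs; split.
- by split; [exact: orth_zero|exact: Q0].
- move=> a S T [orthS QS] [orthT QT]; split; [exact: orth_comb|exact: Qcomb].
- move=> S T [orthS QS] [orthT QT]; exists (orth_sup S T).
  split; last exact: orth_sup_lub.
  split; first by case: (orth_sup_lub orthS orthT).
  have orthD : orthomorphism L (fun y => (-1) *: T y + S y) by apply: orth_comb.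
  have orthA := orth_abs_orth orthD.
  rewrite orth_sup_combE; apply: (Qcomb) => //; try exact: orth_zero.
  + exact: (orth_comb 1 orthS (orth_comb 1 orthT orthA)).
  + apply: (Qcomb) => //; first exact: (orth_comb 1 orthT orthA).
    apply: (Qcomb) => //; apply: (Qabs) => //.
    exact: (Qcomb (-1) T S).
- move=> T [orthT QT]; exists (orth_abs L T); split; last exact: orth_abs_lub.
  by split; [exact: orth_abs_orth|exact: Qabs].
Qed.

End OrthLattice.

Section Topology.
Variables (R : realType) (X : topologicalLmodType R) (L : vector_lattice X).
Local Notation vabs := (@vabs R X L).
Local Notation vpos := (vpos L).
Local Notation vneg := (vneg L).
Local Notation tbounded := (tbounded (X := X)).
Local Notation nb_bounded := (nb_bounded (X := X)).
Local Notation bb_bounded := (bb_bounded (X := X)).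

Lemma nbhs0_half (W : set X) : nbhs 0 W ->
  exists W1 : set X, nbhs 0 W1 /\ forall a b, W1 a -> W1 b -> W (a + b).
Proof.
move=> W0.
have := @add_continuous X (0, 0); rewrite /continuous_at/= addr0 => /(_ W W0)[]/=.
move=> [W1 W2] [] /= h1 h2 Wadd.
exists (W1 `&` W2); split; first exact: filterI.
by move=> a b [ha _] [_ hb]; apply: (Wadd (a, b)); split.
Qed.

Lemma solid_absv V x : solid L V -> V x -> V (vabs x).
Proof. by move=> sV; apply: sV; rewrite absv_idem; apply: lev_refl. Qed.
Lemma solid_opp V x : solid L V -> V x -> V (- x).
Proof. by move=> sV; apply: sV; rewrite absvN; apply: lev_refl. Qed.
Lemma solid_pos V x : solid L V -> V x -> V (vpos x).
Proof. by move=> sV; apply: sV; rewrite (absv_id (vpos_ge0 L x)); apply: vpos_le_abs. Qed.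
Lemma solid_neg V x : solid L V -> V x -> V (vneg x).
Proof. by move=> sV; apply: sV; rewrite (absv_id (vneg_ge0 L x)); apply: vneg_le_abs. Qed.
Lemma solid_scale V c x : solid L V -> `|c| <= 1 -> V x -> V (c *: x).
Proof.
move=> sV c1; apply: sV; rewrite absvZ; apply: subv_ge0_le.
rewrite -{1}[vabs x]scale1r -scalerBl; apply: scalev_ge0; last exact: absv_ge0.
by rewrite subr_ge0.
Qed.

Lemma tbounded_sub (A B : set X) : A `<=` B -> tbounded B -> tbounded A.
Proof.
move=> AB hB U U0; have [t [t0 ht]] := hB U U0.
by exists t; split => // z /AB /ht.
Qed.

Lemma tbounded_zero : tbounded (fun z : X => z = 0).
Proof.
move=> U U0; exists 1; split => // z ->; exists 0; first exact: nbhs_singleton.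
by rewrite scaler0.
Qed.

Lemma tbounded_image_zero (A : set X) : tbounded ((fun _ : X => (0 : X)) @` A).
Proof. by apply: (tbounded_sub _ tbounded_zero) => z [x _ <-]. Qed.

Lemma linear_cont_at0 (F : X -> X) : linear_op F -> continuous F ->
  forall W, nbhs (0 : X) W -> nbhs (0 : X) (F @^-1` W).
Proof.
move=> linF contF W W0.
by have := contF 0; rewrite /continuous_at (linear_op0 linF) => /(_ W W0).
Qed.

Lemma linear_cont_of_at0 (F : X -> X) : linear_op F ->
  (forall W, nbhs (0 : X) W -> nbhs (0 : X) (F @^-1` W)) -> continuous F.
Proof.
move=> linF h x W WFx.
have := @add_continuous X (F x, 0); rewrite /continuous_at /= addr0.
move=> /(_ W WFx) [] /= [A B] [] /= hA hB AB.
have := nbhsB_subproof (@add_continuous X) x (h B hB); rewrite addr0.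
apply: filterS => y [v hv <-]; rewrite /= (linear_opD linF).
by apply: (AB (F x, F v)); split => //=; exact: (nbhs_singleton hA).
Qed.

Lemma linear_comb_cont a (S T : X -> X) : linear_op S -> linear_op T ->
  continuous S -> continuous T -> continuous (fun x => a *: S x + T x).
Proof.
move=> linS linT contS contT.
apply: linear_cont_of_at0; first exact: linear_op_comb.
move=> W W0; have [W1 [h1 hW]] := nbhs0_half W0.
have := @scale_continuous R X (a : R^o, 0 : X); rewrite /continuous_at /= scaler0.
move=> /(_ W1 h1) [] /= [A B] [] /= hA hB AB.
have nbS := linear_cont_at0 linS contS hB.
have nbT := linear_cont_at0 linT contT h1.
apply: filterS (filterI nbS nbT) => x [hx1 hx2] /=; apply: hW => //.
by apply: (AB (a, S x)); split; [exact: (nbhs_singleton hA)|].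
Qed.

Section LocallySolid.
Hypothesis HX : locally_solid L.

Lemma nbhs0_half_solid W : nbhs 0 W ->
  exists V, [/\ nbhs 0 V, solid L V & forall a b, V a -> V b -> W (a + b)].
Proof.
move=> W0; have [W1 [h1 hW]] := nbhs0_half W0.
have [V [V0 sV VW]] := HX h1.
by exists V; split => // a b ha hb; apply: hW; apply: VW.
Qed.

Lemma tbounded_comb a (A1 A2 : set X) : tbounded A1 -> tbounded A2 ->
  tbounded (fun z => exists u v, [/\ A1 u, A2 v & z = a *: u + v]).
Proof.
move=> b1 b2 W W0; have [V [V0 sV hV]] := nbhs0_half_solid W0.
have [t1 [t1p h1]] := b1 V V0; have [t2 [t2p h2]] := b2 V V0.
set t := `|a| * t1 + t2.
have tp : 0 < t by rewrite ltr_wpDl // mulr_ge0 // ltW.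
exists t; split => // z [u [v [hu hv ->]]].
have [w1 hw1 <-] := h1 u hu; have [w2 hw2 <-] := h2 v hv.
exists ((a * t1 / t) *: w1 + (t2 / t) *: w2).
  apply: hV; apply: solid_scale => //.
  - rewrite normrM normfV (gtr0_norm tp) normrM (gtr0_norm t1p) ler_pdivrMr //.
    by rewrite mul1r lerDl ltW.
  - rewrite normrM normfV (gtr0_norm tp) (gtr0_norm t2p) ler_pdivrMr //.
    by rewrite mul1r lerDr mulr_ge0 // ltW.
by rewrite scalerDr !scalerA !(mulrCA t) !mulfV ?gt_eqF // !mulr1.
Qed.

Lemma tbounded_image_comb a S T (A : set X) :
  tbounded (S @` A) -> tbounded (T @` A) ->
  tbounded ((fun x => a *: S x + T x) @` A).
Proof.
move=> bS bT; apply: (tbounded_sub _ (tbounded_comb a bS bT)) => z [x Ax <-].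
by exists (S x), (T x); split; [exists x|exists x|].
Qed.

(* If T maps the positive and negative parts of D into a bounded set, then
   |T| maps D into a bounded set: with V solid, t V contains |T x^+| and
   -|T x^-| whenever it contains T x^+ and T x^-. *)
Lemma tbounded_orth_abs T (D D' : set X) : orthomorphism L T ->
  (forall x, D x -> D' (vpos x) /\ D' (vneg x)) ->
  tbounded (T @` D') -> tbounded (orth_abs L T @` D).
Proof.
move=> orthT hD bdd W W0; have [V [V0 sV hV]] := nbhs0_half_solid W0.
have [t [tp ht]] := bdd V V0.
exists t; split => // z [x Dx <-]; have [d1 d2] := hD x Dx.
have [w1 hw1 e1] : exists2 w, V w & t *: w = T (vpos x) by apply: ht; exists (vpos x).
have [w2 hw2 e2] : exists2 w, V w & t *: w = T (vneg x) by apply: ht; exists (vneg x).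
exists (vabs w1 - vabs w2).
  by apply: hV; [apply: solid_absv|apply: solid_opp => //; apply: solid_absv].
by rewrite /orth_abs -e1 -e2 !absvZ (gtr0_norm tp) scalerBr.
Qed.

Lemma nb_bounded_zero : nb_bounded (fun _ : X => 0).
Proof. by exists setT; split; [exact: filterT|exact: tbounded_image_zero]. Qed.

Lemma nb_bounded_comb a S T : nb_bounded S -> nb_bounded T ->
  nb_bounded (fun x => a *: S x + T x).
Proof.
move=> [U1 [h1 b1]] [U2 [h2 b2]]; exists (U1 `&` U2); split; first exact: filterI.
apply: tbounded_image_comb.
- by apply: (tbounded_sub _ b1) => z [x [x1 _] <-]; exists x.
- by apply: (tbounded_sub _ b2) => z [x [_ x2] <-]; exists x.
Qed.

(* Shrink the neighborhood to a solid one, which contains x^+ and x^-. *)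
Lemma nb_bounded_abs T : orthomorphism L T -> nb_bounded T ->
  nb_bounded (orth_abs L T).
Proof.
move=> orthT [U [hU bU]]; have [V [hV sV VU]] := HX hU.
exists V; split => //; apply: (@tbounded_orth_abs _ _ V) => //.
  by move=> x Vx; split; [apply: solid_pos|apply: solid_neg].
by apply: (tbounded_sub _ bU) => z [x Vx <-]; exists x => //; apply: VU.
Qed.

Lemma bb_bounded_zero : bb_bounded (fun _ : X => 0).
Proof. by move=> B _; exact: tbounded_image_zero. Qed.

Lemma bb_bounded_comb a S T : bb_bounded S -> bb_bounded T ->
  bb_bounded (fun x => a *: S x + T x).
Proof. by move=> hS hT B hB; apply: tbounded_image_comb; [apply: hS|apply: hT]. Qed.

(* The positive and negative parts of a bounded set form a bounded set,
   since t V solid contains (t v)^+ = t v^+ and (t v)^- = t v^-. *)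
Lemma tbounded_parts (B : set X) : tbounded B ->
  tbounded (fun z => exists2 x, B x & (z = vpos x \/ z = vneg x)).
Proof.
move=> hB W W0; have [V [V0 sV VW]] := HX W0.
have [t [tp ht]] := hB V V0.
exists t; split => // z [x Bx hz]; have [v hv ev] := ht x Bx.
case: hz => ->.
- exists (vpos v); first by apply: VW; apply: solid_pos.
  by rewrite -ev vposZ ?ltW.
- exists (vneg v); first by apply: VW; apply: solid_neg.
  by rewrite -ev vnegZ ?ltW.
Qed.

Lemma bb_bounded_abs T : orthomorphism L T -> bb_bounded T ->
  bb_bounded (orth_abs L T).
Proof.
move=> orthT hT B hB; apply: tbounded_orth_abs orthT _ (hT _ (tbounded_parts hB)).
by move=> x Bx; split; exists x => //; [left|right].
Qed.

(* Continuous orthomorphisms: the modulus is continuous at 0 because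
   |T| x = |T x^+| - |T x^-| and solid neighborhoods contain x^+, x^-. *)
Lemma orth_abs_cont T : orthomorphism L T -> continuous T ->
  continuous (orth_abs L T).
Proof.
move=> orthT contT; have [linT _ _] := orthT.
apply: linear_cont_of_at0; first exact: orth_abs_linear.
move=> W W0; have [V [V0 sV hV]] := nbhs0_half_solid W0.
have [U [U0 sU UV]] := HX (linear_cont_at0 linT contT V0).
apply: filterS U0 => x Ux; rewrite /= /orth_abs.
apply: hV; [apply: solid_absv|apply: solid_opp => //; apply: solid_absv] => //;
  apply: UV; [apply: solid_pos|apply: solid_neg] => //.
Qed.

End LocallySolid.
End Topology.

Theorem mainTheorem1 (R : realType) (X : topologicalLmodType R)
  (L : vector_lattice X) (HX : locally_solid L) :
  [/\ orth_sublattice L (nb_bounded (X := X)),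
      orth_sublattice L (bb_bounded (X := X)) &
      orth_sublattice L (fun T : X -> X => continuous T)].
Proof.
split; apply: orth_sublattice_of_closed.
- exact: nb_bounded_zero.
- by move=> a S T _ _; apply: (nb_bounded_comb HX).
- exact: (nb_bounded_abs HX).
- exact: bb_bounded_zero.
- by move=> a S T _ _; apply: (bb_bounded_comb HX).
- exact: (bb_bounded_abs HX).
- exact: cst_continuous.
- by move=> a S T [linS _ _] [linT _ _]; apply: linear_comb_cont.
- exact: (orth_abs_cont HX).
Qed.
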